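(* Let $\mathbb{F}$ be a commutative field, $n\ge 2$ an integer, and $S=\mathbf{PGL}_n(\mathbb{F})$ acting naturally on the projective space $\mathbf{PG}(n-1,\mathbb{F})$. Let $x$ be a point and $\Pi$ a hyperplane of $\mathbf{PG}(n-1,\mathbb{F})$ (any choice), and put $L=S_x$ (the stabilizer of $x$) and $L'=S_\Pi$ (the stabilizer of $\Pi$). Then $(S\wr \mathrm{S}_2,\ L\wr \mathrm{S}_2,\ L'\wr \mathrm{S}_2)$ is an EC-triple.
   Context: For a group $S$ and a subgroup $P$ of the symmetric group on a finite nonempty set $\Omega$, the wreath product $S\wr P$ consists of pairs $(g,p)$ with $g=(g_\omega)_{\omega\in\Omega}\in S^\Omega$ and $p\in P$, with multiplication $(g,p)(g',p')=(g\,p(g'),pp')$, where $p(g')=(g'_{p^{-1}(\omega)})_{\omega\in\Omega}$. For $L\le S$, $L\wr P$ denotes the subgroup $\{(g,p): g\in L^\Omega, p\in P\}$. Here $\mathrm{S}_2$ is the symmetric group on $\{1,2\}$. A triple $(G,H,H')$ with $H,H'\le G$ is an EC-triple if every element of $H$ is conjugate in $G$ to some element of $H'$ and every element of $H'$ is conjugate in $G$ to some element of $H$. *)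

(* PGL_n(F) for a possibly infinite field F is modelled
   concretely: elements of PGL_n(F) are invertible n x n matrices taken up to
   nonzero scalars; S wr S_2 is modelled as triples (A1, A2, p) with p : bool
   (true = the transposition of S_2), and the wreath-product law of the paper. *)
From mathcomp Require Import all_boot all_order all_algebra all_fingroup.
Set Implicit Arguments. Unset Strict Implicit. Unset Printing Implicit Defensive.
Import GRing.Theory.
Local Open Scope ring_scope.

Section Wreath.
Variables (F : fieldType) (n : nat).

Definition wr := ('M[F]_n * 'M[F]_n * bool)%type.

Definition in_wr (w : wr) : Prop :=
  w.1.1 \in unitmx /\ w.1.2 \in unitmx.

(* (g,p)(g',p') = (g p(g'), pp'), p(g')_w = g'_{p^-1 w}. *)
Definition wr_mul (w w' : wr) : wr :=
  if w.2 then (w.1.1 *m w'.1.2, w.1.2 *m w'.1.1, ~~ w'.2)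
  else (w.1.1 *m w'.1.1, w.1.2 *m w'.1.2, w'.2).

Definition wr_inv (w : wr) : wr :=
  if w.2 then (invmx w.1.2, invmx w.1.1, true)
  else (invmx w.1.1, invmx w.1.2, false).

Definition wr_proj_eq (w w' : wr) : Prop :=
  w.2 = w'.2 /\
  exists a1 a2 : F, a1 != 0 /\ a2 != 0 /\
    w'.1.1 = a1 *: w.1.1 /\ w'.1.2 = a2 *: w.1.2.

Definition wr_conj (w w' : wr) : Prop :=
  exists v : wr, in_wr v /\ wr_proj_eq (wr_mul (wr_inv v) (wr_mul w v)) w'.

(* L wr S_2 for L given by a (scalar-invariant) predicate on GL_n(F). *)
Definition wr_sub (L : 'M[F]_n -> Prop) (w : wr) : Prop :=
  in_wr w /\ L w.1.1 /\ L w.1.2.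

Definition EC_triple_wr (H H' : wr -> Prop) : Prop :=
  (forall h, H h -> exists h', H' h' /\ wr_conj h h') /\
  (forall h', H' h' -> exists h, H h /\ wr_conj h' h).

(* Natural action of GL_n(F) on row vectors (v |-> v *m g), inducing the
   action of PGL_n(F) on PG(n-1,F). A point is the row space of a nonzero row
   vector x; a hyperplane is the row space of a matrix of rank n-1. *)
Definition stab_point (x : 'rV[F]_n) (g : 'M[F]_n) : Prop :=
  (x *m g == x)%MS.
Definition stab_subspace (P : 'M[F]_n) (g : 'M[F]_n) : Prop :=
  (P *m g == P)%MS.

End Wreath.

From mathcomp Require Import all_boot all_order all_algebra all_fingroup.
Set Implicit Arguments. Unset Strict Implicit. Unset Printing Implicit Defensive.
Import GRing.Theory.
Local Open Scope ring_scope.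

(* GL_n(F) acts transitively on subspaces of a given dimension, so stabilizers
   of subspaces of equal dimension are conjugate. A matrix g fixes a point iff
   it has an eigenvalue, iff g^T has one, iff g fixes a hyperplane (the
   annihilator of a g^T-fixed line). Hence every element of S_x is conjugate
   into S_Pi and conversely. In the wreath product, (g1, g2, 1) is conjugate
   to (g1', g2', 1) for conjugates gi' of gi, and (g1, g2, (12)) is conjugate
   to (g1 g2, 1, (12)); since stabilizers are closed under products and contain
   1, this reduces the wreath statement to the one for S. *)

Section Stabilizers.
Variables (F : fieldType) (n : nat).

Lemma eigenvalue_tr (g : 'M[F]_n) a : eigenvalue g^T a = eigenvalue g a.
Proof.
rewrite /eigenvalue /eigenspace -!mxrank_eq0 !mxrank_ker.
by rewrite -mxrank_tr linearB /= tr_scalar_mx trmxK.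
Qed.

Lemma mxrank_eq_unitmx m1 m2 (A : 'M[F]_(m1, n)) (B : 'M[F]_(m2, n)) :
  \rank A = \rank B -> exists2 P : 'M[F]_n, P \in unitmx & (A *m P :=: B)%MS.
Proof.
move=> rAB; exists (invmx (row_ebase A) *m row_ebase B).
  by rewrite unitmx_mul unitmx_inv !row_ebase_unit.
apply: eqmx_trans (eqmxMr _ (eqmx_sym (eq_row_base A))) _.
rewrite /row_base -!mulmxA (mulmxA (row_ebase A)) mulmxV ?row_ebase_unit //.
by rewrite mul1mx rAB; apply: eq_row_base.
Qed.

Lemma stab_unitmx m (A : 'M[F]_(m, n)) g :
  g \in unitmx -> (A *m g <= A)%MS -> (A *m g == A)%MS.
Proof.
move=> gU sAgA; rewrite /eqmx sAgA /=.
by rewrite -(mxrank_leqif_sup sAgA) mxrankMfree // row_free_unit.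
Qed.

Lemma stab_mul m (A : 'M[F]_(m, n)) g h :
  (A *m g == A)%MS -> (A *m h == A)%MS -> (A *m (g *m h) == A)%MS.
Proof.
move=> /eqmxP Ag /eqmxP Ah; apply/eqmxP; rewrite mulmxA.
exact: eqmx_trans (eqmxMr _ Ag) Ah.
Qed.

Lemma stab1 m (A : 'M[F]_(m, n)) : (A *m 1%:M == A)%MS.
Proof. by rewrite mulmx1; apply/eqmxP. Qed.

Lemma stab_conj m1 m2 (A : 'M[F]_(m1, n)) (B : 'M[F]_(m2, n)) g :
  \rank A = \rank B -> (A *m g == A)%MS ->
  exists2 P : 'M[F]_n, P \in unitmx & (B *m (invmx P *m g *m P) == B)%MS.
Proof.
move=> /mxrank_eq_unitmx [P PU AP] /eqmxP Ag; exists P => //.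
have BP'A : (B *m invmx P :=: A)%MS.
  apply: eqmx_trans (eqmxMr _ (eqmx_sym AP)) _.
  by rewrite -mulmxA mulmxV // mulmx1.
apply/eqmxP; rewrite !mulmxA.
apply: eqmx_trans (eqmxMr _ (eqmxMr _ BP'A)) _.
exact: eqmx_trans (eqmxMr _ Ag) AP.
Qed.

Lemma stab_kermx_tr m (A : 'M[F]_(m, n)) g :
  (A *m g <= A)%MS -> (kermx A^T *m g^T <= kermx A^T)%MS.
Proof.
case/submxP=> D AgDA; apply/sub_kermxP.
by rewrite -mulmxA -trmx_mul AgDA trmx_mul mulmxA mulmx_ker mul0mx.
Qed.

Lemma fixed_line_eigenvalue (g : 'M[F]_n) :
  g \in unitmx ->
  (exists2 u : 'rV[F]_n, u != 0 & (u *m g == u)%MS) <-> exists a, eigenvalue g a.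
Proof.
move=> gU; split=> [[u u0 /andP[/sub_rVP[a ugau] _]] | [a /eigenvalueP[u ugau u0]]].
  by exists a; apply/eigenvalueP; exists u.
by exists u => //; apply: stab_unitmx => //; rewrite ugau scalemx_sub.
Qed.

Lemma fixed_line_fixed_hyperplane (g : 'M[F]_n) :
  g \in unitmx -> (exists2 u : 'rV[F]_n, u != 0 & (u *m g == u)%MS) ->
  exists2 K : 'M[F]_n, \rank K = n.-1 & (K *m g == K)%MS.
Proof.
move=> gU /(fixed_line_eigenvalue gU) [a]; rewrite -eigenvalue_tr => gTa.
have gTU : g^T \in unitmx by rewrite unitmx_tr.
have /(fixed_line_eigenvalue gTU) [w w0 /andP[wgTw _]] : exists a, eigenvalue g^T a.
  by exists a.
exists (kermx w^T); first by rewrite mxrank_ker mxrank_tr rank_rV w0 subn1.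
by apply: stab_unitmx => //; rewrite -[g]trmxK; apply: stab_kermx_tr.
Qed.

Lemma fixed_hyperplane_fixed_line (K g : 'M[F]_n) :
  (0 < n)%N -> g \in unitmx -> \rank K = n.-1 -> (K *m g == K)%MS ->
  exists2 u : 'rV[F]_n, u != 0 & (u *m g == u)%MS.
Proof.
move=> n_gt0 gU rK /andP[KgK _].
have gTU : g^T \in unitmx by rewrite unitmx_tr.
have rKer : \rank (kermx K^T) = 1%N.
  by rewrite mxrank_ker mxrank_tr rK -{1}(prednK n_gt0) subSnn.
have [u uKer u0] : exists2 u : 'rV[F]_n, (u <= kermx K^T)%MS & u != 0.
  by apply/rowV0Pn; rewrite -mxrank_eq0 rKer.
have Keru : (kermx K^T <= u)%MS by rewrite -(mxrank_leqif_sup uKer) rKer rank_rV u0.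
have [a gTa] : exists a, eigenvalue g^T a.
  apply: (fixed_line_eigenvalue gTU).1; exists u => //; apply: stab_unitmx => //.
  exact: submx_trans (submx_trans (submxMr _ uKer) (stab_kermx_tr KgK)) Keru.
by apply: (fixed_line_eigenvalue gU).2; exists a; rewrite -eigenvalue_tr.
Qed.

End Stabilizers.

Section WreathConjugacy.
Variables (F : fieldType) (n : nat).
Implicit Types (g P : 'M[F]_n) (w v : wr F n).

Lemma wr_conj_by w v : in_wr v -> wr_conj w (wr_mul (wr_inv v) (wr_mul w v)).
Proof.
move=> vU; exists v; split=> //; split=> //.
by exists 1, 1; rewrite !scale1r oner_neq0.
Qed.

Lemma wr_conj_diag g1 g2 P1 P2 : P1 \in unitmx -> P2 \in unitmx ->
  wr_conj (g1, g2, false) (invmx P1 *m g1 *m P1, invmx P2 *m g2 *m P2, false).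
Proof.
move=> P1U P2U; have := @wr_conj_by (g1, g2, false) (P1, P2, false).
by rewrite /wr_mul /wr_inv /= !mulmxA; apply.
Qed.

Lemma wr_conj_swap g1 g2 P : g2 \in unitmx -> P \in unitmx ->
  wr_conj (g1, g2, true) (invmx P *m (g1 *m g2) *m P, 1%:M, true).
Proof.
move=> g2U PU; have g2PU : g2 *m P \in unitmx by rewrite unitmx_mul g2U.
have := @wr_conj_by (g1, g2, true) (P, g2 *m P, false).
by rewrite /wr_mul /wr_inv /= mulVmx // !mulmxA; apply.
Qed.

Lemma wr_sub_conj (L L' : 'M[F]_n -> Prop) :
  (forall g h, L g -> L h -> L (g *m h)) -> L' 1%:M ->
  (forall g, g \in unitmx -> L g ->
     exists2 P, P \in unitmx & L' (invmx P *m g *m P)) ->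
  forall w, wr_sub L w -> exists w', wr_sub L' w' /\ wr_conj w w'.
Proof.
move=> mulL L'1 conjL [[g1 g2] []] [[/= g1U g2U] [/= Lg1 Lg2]].
  have g12U : g1 *m g2 \in unitmx by rewrite unitmx_mul g1U.
  have [P PU L'P] := conjL _ g12U (mulL _ _ Lg1 Lg2).
  exists (invmx P *m (g1 *m g2) *m P, 1%:M, true).
  split; last exact: wr_conj_swap.
  split; last by split.
  by split; rewrite /= ?unitmx1 // !unitmx_mul unitmx_inv PU g1U g2U.
have [P1 P1U L'P1] := conjL _ g1U Lg1.
have [P2 P2U L'P2] := conjL _ g2U Lg2.
exists (invmx P1 *m g1 *m P1, invmx P2 *m g2 *m P2, false).
split; last exact: wr_conj_diag.
split; last by split.
by split; rewrite /= !unitmx_mul unitmx_inv ?P1U ?P2U ?g1U ?g2U.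
Qed.

Lemma wr_sub_stab_conj m1 m2 (A : 'M[F]_(m1, n)) (B : 'M[F]_(m2, n)) :
  (forall g, g \in unitmx -> (A *m g == A)%MS ->
     exists2 C : 'M[F]_(m2, n), \rank C = \rank B & (C *m g == C)%MS) ->
  forall w, wr_sub (fun g => (A *m g == A)%MS) w ->
    exists w', wr_sub (fun g => (B *m g == B)%MS) w' /\ wr_conj w w'.
Proof.
move=> stabAB; apply: wr_sub_conj => [g h||g gU /(stabAB g gU) [C rCB CgC]].
- exact: stab_mul.
- exact: stab1.
- exact: stab_conj CgC.
Qed.

End WreathConjugacy.

Theorem mainTheorem2 (F : fieldType) (n : nat) (hn : (2 <= n)%N)
  (x : 'rV[F]_n) (Pi : 'M[F]_n)
  (hx : x != 0) (hPi : \rank Pi = n.-1) :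
  EC_triple_wr
    (wr_sub (stab_point x))
    (wr_sub (stab_subspace Pi)).
Proof.
have n_gt0 : (0 < n)%N by apply: leq_trans hn.
split; apply: wr_sub_stab_conj => g gU gstab.
- by rewrite hPi; apply: fixed_line_fixed_hyperplane => //; exists x.
- have [u u0 ugu] := fixed_hyperplane_fixed_line n_gt0 gU hPi gstab.
  by exists u; rewrite // !rank_rV u0 hx.
Qed.
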